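(* Let $\Phi$ be irreducible with highest root $\gamma$ and $\mathfrak h_\gamma=\Phi^+\setminus\{\gamma\}$. Fix $w\in W$ and $\beta\in\Phi^+$. Then there is at most one $v\in W$ such that $v>w$ in Bruhat order, $\beta\in N^\gamma_w\cap N_v$, $\ell_\gamma(w)=\ell_\gamma(v)$, and $v^{-1}\beta=-\gamma$.
   Context: $\Phi$ is a crystallographic root system in a real Euclidean space with base $\Delta$, positive roots $\Phi^+$, $\Phi^-=-\Phi^+$, Weyl group $W$; $s_\alpha$ is the reflection through $\alpha$. $\Phi$ irreducible means it is not a disjoint union of two root systems; then there is a unique highest root $\gamma\in\Phi^+$ with $\alpha\prec\gamma$ for all $\alpha\in\Phi$, where $\alpha\prec\beta$ means $\beta-\alpha$ is a sum of positive roots. For $w\in W$, $N_w=\{\beta\in\Phi^+: w^{-1}\beta\in\Phi^-\}$, $N^\gamma_w=\{\beta\in\Phi^+: w^{-1}\beta\in-\mathfrak h_\gamma\}$, and $\ell_\gamma(w)=|N^\gamma_w|$. Bruhat order $<$ is the transitive closure of the relations $u<s_\alpha u$ for $\alpha\in\Phi^+$ with $(s_\alpha u)^{-1}\alpha\in\Phi^-$. *)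

From HB Require Import structures.
From mathcomp Require Import all_boot all_order all_algebra.
From mathcomp Require Import boolp reals.
Set Implicit Arguments. Unset Strict Implicit. Unset Printing Implicit Defensive.
Import Order.TTheory GRing.Theory Num.Theory.
Local Open Scope ring_scope.

(* The real Euclidean space is R^n (column vectors 'cV[R]_n) with the
   standard inner product; Weyl group elements are n x n matrices acting
   on the left, so  s_a u  is  refl a *m u  and  w^{-1} b  is  invmx w *m b. *)

Section RootSystems.
Variables (R : realType) (n : nat).
Local Notation vec := 'cV[R]_n.
Local Notation mat := 'M[R]_n.

Definition dot (x y : vec) : R := (x^T *m y) 0 0.

Definition refl (a : vec) : mat := 1%:M - (2 / dot a a) *: (a *m a^T).

(* crystallographic (reduced) root system spanning R^n; finite since a seq *)
Definition root_system (Phi : seq vec) : Prop :=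
  [/\ (0 : vec) \notin Phi,
      (forall x : vec, exists c : nat -> R,
          x = \sum_(i < size Phi) c i *: Phi`_i),
      (forall a b, a \in Phi -> b \in Phi -> refl a *m b \in Phi),
      (forall a b, a \in Phi -> b \in Phi ->
          exists z : int, 2 * dot b a / dot a a = z%:~R) &
      (forall a (c : R), a \in Phi -> c *: a \in Phi -> c = 1 \/ c = -1)].

Definition irreducible (Phi : seq vec) : Prop :=
  Phi != [::] /\
  forall P : pred vec,
    (forall a b, a \in Phi -> b \in Phi -> P a -> ~~ P b -> dot a b = 0) ->
    (forall a, a \in Phi -> P a) \/ (forall a, a \in Phi -> ~~ P a).

Definition is_base (Phi Delta : seq vec) : Prop :=
  [/\ {subset Delta <= Phi},
      (forall c : 'I_(size Delta) -> R,
          \sum_(i < size Delta) c i *: Delta`_i = 0 -> forall i, c i = 0) &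
      (forall b, b \in Phi -> exists k : 'I_(size Delta) -> int,
          b = \sum_(i < size Delta) (k i)%:~R *: Delta`_i /\
          ((forall i, 0 <= k i) \/ (forall i, k i <= 0)))].

Definition posroot (Phi Delta : seq vec) (b : vec) : Prop :=
  b \in Phi /\ exists k : 'I_(size Delta) -> int,
    (forall i, 0 <= k i) /\ b = \sum_(i < size Delta) (k i)%:~R *: Delta`_i.

Definition negroot (Phi Delta : seq vec) (b : vec) : Prop :=
  posroot Phi Delta (- b).

Definition prec (Phi Delta : seq vec) (a b : vec) : Prop :=
  exists s : seq vec, (forall x, x \in s -> posroot Phi Delta x) /\
    b - a = \sum_(x <- s) x.

Definition highest_root (Phi Delta : seq vec) (g : vec) : Prop :=
  posroot Phi Delta g /\ forall a, a \in Phi -> prec Phi Delta a g.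

Inductive weyl (Phi : seq vec) : mat -> Prop :=
  | weyl_refl a : a \in Phi -> weyl Phi (refl a)
  | weyl_one : weyl Phi 1%:M
  | weyl_mul u v : weyl Phi u -> weyl Phi v -> weyl Phi (u *m v)
  | weyl_inv u : weyl Phi u -> weyl Phi (invmx u).

Definition Nset (Phi Delta : seq vec) (w : mat) (b : vec) : Prop :=
  posroot Phi Delta b /\ negroot Phi Delta (invmx w *m b).

Definition hgamma (Phi Delta : seq vec) (g b : vec) : Prop :=
  posroot Phi Delta b /\ b <> g.

Definition Ngamma (Phi Delta : seq vec) (g : vec) (w : mat) (b : vec) : Prop :=
  posroot Phi Delta b /\ hgamma Phi Delta g (- (invmx w *m b)).

Definition ell_gamma (Phi Delta : seq vec) (g : vec) (w : mat) : nat :=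
  size (undup [seq b <- Phi | `[< Ngamma Phi Delta g w b >]]).

Inductive bruhat_lt (Phi Delta : seq vec) : mat -> mat -> Prop :=
  | bruhat_step u a : weyl Phi u -> posroot Phi Delta a ->
      negroot Phi Delta (invmx (refl a *m u) *m a) ->
      bruhat_lt Phi Delta u (refl a *m u)
  | bruhat_trans u v x : bruhat_lt Phi Delta u v -> bruhat_lt Phi Delta v x ->
      bruhat_lt Phi Delta u x.

End RootSystems.

From HB Require Import structures.
From mathcomp Require Import all_boot all_order all_algebra.
From mathcomp Require Import boolp reals ring.
Import Order.TTheory GRing.Theory Num.Theory.
Local Open Scope ring_scope.
Set Implicit Arguments. Unset Strict Implicit.

(* A Bruhat step u < s_a u raises ell = |N_u| by at least one, so ell (v) > ell (w) + 1
   unless v = s_a w covers w in a single step. On the other hand beta is the only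
   positive root sent to -gamma by v^-1, so N_v is contained in N^gamma_v + {beta} and
   ell (v) <= ell_gamma (v) + 1 = ell_gamma (w) + 1 <= ell (w) + 1. Hence v = s_a w, and
   s_a beta = w (-gamma) != beta forces s_a = s_(beta + w gamma): v is determined. *)

Section Reflections.
Variables (R : realType) (n : nat).
Local Notation vec := 'cV[R]_n.
Local Notation mat := 'M[R]_n.

Lemma mulmx_mx11 (x : vec) (y : 'M[R]_1) : x *m y = y 0 0 *: x.
Proof. by rewrite {1}[y]mx11_scalar mul_mx_scalar. Qed.

Lemma refl_mulmx (a b : vec) : refl a *m b = b - (2 / dot a a * dot a b) *: a.
Proof. by rewrite /refl mulmxBl mul1mx -scalemxAl -mulmxA mulmx_mx11 scalerA. Qed.

Lemma dot_self_neq0 (b : vec) : b != 0 -> dot b b != 0.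
Proof.
apply: contraNN; rewrite /dot mxE psumr_eq0 => [/allP b0|i _]; last first.
  by rewrite mxE -expr2 sqr_ge0.
apply/eqP/matrixP => i j; rewrite (ord1 j) !mxE.
by have := b0 i (mem_index_enum i); rewrite mxE mulf_eq0 orbb => /eqP.
Qed.

Lemma refl_self (a : vec) : a != 0 -> refl a *m a = - a.
Proof.
move=> a0; rewrite refl_mulmx divfK ?dot_self_neq0 //.
by rewrite scaler_nat mulr2n opprD addrA subrr sub0r.
Qed.

Lemma refl_mulmx_refl (a : vec) : refl a *m refl a = 1%:M.
Proof.
rewrite /refl; set c := 2 / dot a a; set A := a *m a^T.
have AA : A *m A = dot a a *: A.
  by rewrite /A mulmxA -(mulmxA a) mulmx_mx11 -scalemxAl.
have cc : c * (c * dot a a) = c + c.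
  rewrite /c; have [->|d0] := eqVneq (dot a a) 0; first by rewrite invr0 !mulr0 addr0.
  by field.
rewrite mulmxBl mul1mx mulmxBr mulmx1 -scalemxAl -scalemxAr AA !scalerA -mulrA cc.
by rewrite scalerDl opprB addrK subrK.
Qed.

Lemma refl_unitmx (a : vec) : refl a \in unitmx.
Proof. by case: (mulmx1_unit (refl_mulmx_refl a)). Qed.

Lemma invmx_eq (A B : mat) : A \in unitmx -> A *m B = 1%:M -> invmx A = B.
Proof. by move=> uA AB; rewrite -(mulKmx uA B) AB mulmx1. Qed.

Lemma refl_invmx (a : vec) : invmx (refl a) = refl a.
Proof. exact: invmx_eq (refl_unitmx a) (refl_mulmx_refl a). Qed.

Lemma invmxM (A B : mat) : A \in unitmx -> B \in unitmx ->
  invmx (A *m B) = invmx B *m invmx A.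
Proof.
move=> uA uB; apply: invmx_eq; first by rewrite unitmx_mul uA.
by rewrite mulmxA -(mulmxA A) mulmxV // mulmx1 mulmxV.
Qed.

Lemma invmx_refl_mulmx (a : vec) (u : mat) :
  u \in unitmx -> invmx (refl a *m u) = invmx u *m refl a.
Proof. by move=> uu; rewrite invmxM ?refl_unitmx // refl_invmx. Qed.

Lemma reflZ (a : vec) (c : R) : c != 0 -> refl (c *: a) = refl a.
Proof.
move=> c0; have trZ : (c *: a)^T = c *: a^T by apply/matrixP => i j; rewrite !mxE.
rewrite /refl /dot trZ -!scalemxAl -!scalemxAr !scalerA !mxE.
set d := \sum_j _; congr (_ - _ *: _).
have [->|d0] := eqVneq d 0; first by rewrite !(mulr0, invr0, mul0r).
by field; rewrite c0 d0.
Qed.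

Lemma refl_eq_sub (a x y : vec) :
  refl a *m x = y -> x != y -> refl a = refl (x - y).
Proof.
rewrite refl_mulmx => <- xy; rewrite opprB addrC subrK reflZ //.
by apply: contraNneq xy => ->; rewrite scale0r subr0.
Qed.

End Reflections.

Section RootSystem.
Variables (R : realType) (n : nat) (Phi Delta : seq 'cV[R]_n).
Hypotheses (hPhi : root_system Phi) (hDelta : is_base Phi Delta).
Local Notation vec := 'cV[R]_n.
Local Notation mat := 'M[R]_n.
Local Notation posroot := (posroot Phi Delta).
Local Notation negroot := (negroot Phi Delta).

Definition base_cone (x : vec) : Prop := exists r : 'I_(size Delta) -> R,
  (forall i, 0 <= r i) /\ x = \sum_(i < size Delta) r i *: Delta`_i.

Lemma base_coneD x y : base_cone x -> base_cone y -> base_cone (x + y).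
Proof.
move=> [r [r0 ->]] [s [s0 ->]]; exists (fun i => r i + s i); split.
  by move=> i; rewrite addr_ge0.
by rewrite -big_split; apply: eq_bigr => i _; rewrite scalerDl.
Qed.

Lemma base_coneZ x c : 0 <= c -> base_cone x -> base_cone (c *: x).
Proof.
move=> c0 [r [r0 ->]]; exists (fun i => c * r i); split.
  by move=> i; rewrite mulr_ge0.
by rewrite scaler_sumr; apply: eq_bigr => i _; rewrite scalerA.
Qed.

Lemma posroot_base_cone b : posroot b -> base_cone b.
Proof.
by move=> [_ [k [k0 ->]]]; exists (fun i => (k i)%:~R); split=> // i; rewrite ler0z.
Qed.

Lemma base_cone_antisym x : base_cone x -> base_cone (- x) -> x = 0.
Proof.
case: hDelta => _ Delta_free _ [r [r0 ->]] [s [s0 Nx]].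
have rs0 : \sum_(i < size Delta) (r i + s i) *: Delta`_i = 0.
  under eq_bigr do rewrite scalerDl.
  by rewrite big_split /= -Nx subrr.
apply: big1 => i _; have /eqP := Delta_free _ rs0 i.
by rewrite paddr_eq0 // => /andP[/eqP -> _]; rewrite scale0r.
Qed.

Lemma root_neq0 b : b \in Phi -> b != 0.
Proof. by case: hPhi => Phi0 _ _ _ _ bPhi; apply: contraNneq Phi0 => <-. Qed.

Lemma refl_root a b : a \in Phi -> b \in Phi -> refl a *m b \in Phi.
Proof. by case: hPhi => _ _ + _ _; apply. Qed.

Lemma oppr_root b : b \in Phi -> - b \in Phi.
Proof. by move=> bPhi; rewrite -refl_self ?root_neq0 ?refl_root. Qed.

Lemma posroot_or_negroot b : b \in Phi -> posroot b \/ negroot b.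
Proof.
move=> bPhi; case: hDelta => _ _ /(_ b bPhi) [k [bk [k0|k0]]].
  by left; split=> //; exists k.
right; split; first exact: oppr_root.
exists (fun i => - k i); split=> [i|]; first by rewrite oppr_ge0.
by rewrite bk -sumrN; apply: eq_bigr => i _; rewrite mulrNz scaleNr.
Qed.

Lemma negroot_base_cone b : negroot b -> ~ base_cone b.
Proof.
move=> nb /base_cone_antisym /(_ (posroot_base_cone nb)) b0.
by case: nb => Nb _; move: (root_neq0 Nb); rewrite b0 oppr0 eqxx.
Qed.

Lemma posroot_neg b : posroot b -> ~ negroot b.
Proof. by move=> /posroot_base_cone pb /negroot_base_cone. Qed.

(* Stated for [u] and [invmx u] together so that the [weyl_inv] case goes through. *)
Lemma weyl_stable u : weyl Phi u -> u \in unitmx /\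
  forall b, b \in Phi -> u *m b \in Phi /\ invmx u *m b \in Phi.
Proof.
elim=> {u} [a aPhi| |u v _ [uu stu] _ [uv stv]|u _ [uu stu]].
- split=> [|b bPhi]; first exact: refl_unitmx.
  by rewrite refl_invmx refl_root.
- by split=> [|b]; rewrite ?unitmx1 // invmx1 mul1mx.
- split=> [|b bPhi]; first by rewrite unitmx_mul uu uv.
  rewrite invmxM // -!mulmxA.
  by split; [apply: (stu _ (stv _ bPhi).1).1 | apply: (stv _ (stu _ bPhi).2).2].
- by rewrite unitmx_inv invmxK; split=> // b /stu [].
Qed.

Lemma weyl_unitmx u : weyl Phi u -> u \in unitmx.
Proof. by case/weyl_stable. Qed.

Lemma weyl_invmx_root u b : weyl Phi u -> b \in Phi -> invmx u *m b \in Phi.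
Proof. by case/weyl_stable=> _ stu /stu []. Qed.

Definition rootset (P : vec -> Prop) : seq vec := undup [seq b <- Phi | `[< P b >]].

Lemma mem_rootset P b : b \in rootset P <-> b \in Phi /\ P b.
Proof.
rewrite mem_undup mem_filter andbC.
by split=> [/andP[-> /asboolP]|[-> /asboolP]].
Qed.

Definition ell (u : mat) : nat := size (rootset (Nset Phi Delta u)).

Section ReflectionStep.
Variables (a : vec) (u : mat).
Hypotheses (hu : weyl Phi u) (ha : posroot a) (hua : posroot (invmx u *m a)).

Lemma refl_coef_ge0 b : posroot b -> negroot (refl a *m b) ->
  0 <= 2 / dot a a * dot a b.
Proof.
move=> pb /negroot_base_cone; apply: contra_notP => /negP; rewrite -ltNge => c_lt0.
rewrite refl_mulmx -scaleNr; apply: base_coneD; first exact: posroot_base_cone.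
by apply: base_coneZ; [rewrite oppr_ge0 ltW | exact: posroot_base_cone].
Qed.

Lemma Nset_refl_mulmx b : Nset Phi Delta u b -> negroot (refl a *m b) ->
  Nset Phi Delta (refl a *m u) b.
Proof.
move=> [pb nub] nab; split=> //.
have x_root : invmx u *m (refl a *m b) \in Phi.
  by apply/weyl_invmx_root/refl_root => //; [case: ha | case: pb].
rewrite invmx_refl_mulmx ?weyl_unitmx // -mulmxA.
have [px|//] := posroot_or_negroot x_root; exfalso.
apply: (negroot_base_cone (b := - (invmx u *m (refl a *m b)))).
  by rewrite /negroot opprK.
rewrite refl_mulmx mulmxBr opprB -scalemxAr addrC.
apply: base_coneD; first exact: posroot_base_cone nub.
by apply: base_coneZ; [exact: refl_coef_ge0 | exact: posroot_base_cone].
Qed.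

Lemma ell_lt_refl_mulmx : (ell u < ell (refl a *m u))%N.
Proof.
have uu := weyl_unitmx hu; have aPhi : a \in Phi by case: ha.
set t := refl a.
have ttK (x : vec) : t *m (t *m x) = x by rewrite mulmxA refl_mulmx_refl mul1mx.
(* [f] injects [N_u] into [N_(s_a u)], and misses [a]. *)
pose f b := if `[< posroot (t *m b) >] then t *m b else b.
have f_Nset b :
    b \in rootset (Nset Phi Delta u) -> f b \in rootset (Nset Phi Delta (t *m u)).
  move=> /mem_rootset [bPhi Nb]; apply/mem_rootset; rewrite /f.
  case: asboolP => [ptb|ptb]; last first.
    split=> //; apply: Nset_refl_mulmx => //.
    by have [] := posroot_or_negroot (refl_root aPhi bPhi).
  split; first by case: ptb.
  by split=> //; rewrite invmx_refl_mulmx // -mulmxA ttK; case: Nb.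
have f_inj : {in rootset (Nset Phi Delta u) &, injective f}.
  move=> b1 b2 /mem_rootset [_ [p1 _]] /mem_rootset [_ [p2 _]]; rewrite /f.
  case: asboolP => h1; case: asboolP => h2 e //.
  - by rewrite -(ttK b1) e ttK.
  - by case: h2; rewrite -e ttK.
  - by case: h1; rewrite e ttK.
have a_Nset : a \in rootset (Nset Phi Delta (t *m u)).
  apply/mem_rootset; split=> //; split=> //.
  by rewrite invmx_refl_mulmx // -mulmxA refl_self ?root_neq0 // mulmxN /negroot opprK.
have a_notin_f : a \notin map f (rootset (Nset Phi Delta u)).
  apply/mapP => -[b /mem_rootset [_ [pb nb]]]; rewrite /f.
  case: asboolP => _ e; last by apply: (posroot_neg hua); rewrite e.
  have eb : b = - a by rewrite -(ttK b) -e refl_self ?root_neq0.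
  by apply: (posroot_neg pb); rewrite /negroot eb opprK.
rewrite /ell -(size_map f) -ltnS.
apply: (uniq_leq_size (s1 := a :: _)).
  by rewrite /= a_notin_f map_inj_in_uniq ?undup_uniq.
by move=> x; rewrite inE => /predU1P [->|/mapP [b /f_Nset ? ->]].
Qed.

End ReflectionStep.

Lemma bruhat_lt_weyl u v : bruhat_lt Phi Delta u v -> weyl Phi u /\ weyl Phi v.
Proof.
elim=> {u v} [u a hu [aPhi _] _ | u v x _ [hu _] _ [_ hx]] //.
by split=> //; apply: weyl_mul => //; apply: weyl_refl.
Qed.

Lemma bruhat_lt_ell u v : bruhat_lt Phi Delta u v -> (ell u < ell v)%N.
Proof.
elim=> {u v} [u a hu ha nua | u v x _ + _]; last exact: ltn_trans.
apply: ell_lt_refl_mulmx => //.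
have a0 : a != 0 by case: ha => /root_neq0.
move: nua; rewrite invmx_refl_mulmx ?weyl_unitmx // -mulmxA refl_self //.
by rewrite mulmxN /negroot opprK.
Qed.

Lemma bruhat_lt_cover u v : bruhat_lt Phi Delta u v -> (ell v <= (ell u).+1)%N ->
  exists2 a, posroot a & v = refl a *m u.
Proof.
case=> {u v} [u a _ ha _ _ | u v x uv vx]; first by exists a.
have := leq_ltn_trans (bruhat_lt_ell uv) (bruhat_lt_ell vx).
by rewrite ltnNge => /negP.
Qed.

Lemma ell_gamma_le_ell g u : (ell_gamma Phi Delta g u <= ell u)%N.
Proof.
apply: uniq_leq_size; first exact: undup_uniq.
by move=> b /mem_rootset [bPhi [pb [nb _]]]; apply/mem_rootset.
Qed.

Lemma ell_le_ell_gammaS g u b : u \in unitmx -> invmx u *m b = - g ->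
  (ell u <= (ell_gamma Phi Delta g u).+1)%N.
Proof.
move=> uu ub; apply: (uniq_leq_size (s1 := rootset _) (s2 := b :: _)).
  exact: undup_uniq.
move=> c /mem_rootset [cPhi [pc nc]]; rewrite inE; apply/predU1P.
have [->|cb] := eqVneq c b; [by left | right; apply/mem_rootset].
do 3!split=> //; apply: contra_neq_not cb => ucg.
by rewrite -(mulKVmx uu c) -(mulKVmx uu b) ub -ucg opprK.
Qed.

End RootSystem.

Lemma bruhat_lt_ell_gamma_eq (R : realType) (n : nat) (Phi Delta : seq 'cV[R]_n)
    (g : 'cV[R]_n) (w v : 'M[R]_n) (b : 'cV[R]_n) :
  root_system Phi -> is_base Phi Delta -> bruhat_lt Phi Delta w v ->
  Ngamma Phi Delta g w b -> ell_gamma Phi Delta g w = ell_gamma Phi Delta g v ->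
  invmx v *m b = - g -> v = refl (b - w *m - g) *m w.
Proof.
move=> hPhi hDelta wv [_ [_ wb_neq]] ell_wv vb.
have [/(weyl_unitmx hPhi) uw /(weyl_unitmx hPhi) uv] := bruhat_lt_weyl wv.
have [|a _ va] := bruhat_lt_cover hPhi hDelta wv.
  apply: leq_trans (ell_le_ell_gammaS Phi Delta uv vb) _.
  by rewrite -ell_wv ltnS ell_gamma_le_ell.
rewrite va; congr (_ *m _); apply: refl_eq_sub.
  by rewrite -vb va invmx_refl_mulmx // -mulmxA mulKVmx.
by apply: contra_not_neq wb_neq => ->; rewrite mulKmx ?opprK.
Qed.

Theorem corollary3p2 (R : realType) (n : nat)
    (Phi Delta : seq 'cV[R]_n) (gamma : 'cV[R]_n)
    (hPhi : root_system Phi) (hirr : irreducible Phi)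
    (hDelta : is_base Phi Delta) (hgamma : highest_root Phi Delta gamma)
    (w : 'M[R]_n) (hw : weyl Phi w)
    (beta : 'cV[R]_n) (hbeta : posroot Phi Delta beta)
    (v1 v2 : 'M[R]_n) :
  (weyl Phi v1 /\ bruhat_lt Phi Delta w v1 /\
   Ngamma Phi Delta gamma w beta /\ Nset Phi Delta v1 beta /\
   ell_gamma Phi Delta gamma w = ell_gamma Phi Delta gamma v1 /\
   invmx v1 *m beta = - gamma) ->
  (weyl Phi v2 /\ bruhat_lt Phi Delta w v2 /\
   Ngamma Phi Delta gamma w beta /\ Nset Phi Delta v2 beta /\
   ell_gamma Phi Delta gamma w = ell_gamma Phi Delta gamma v2 /\
   invmx v2 *m beta = - gamma) ->
  v1 = v2.
Proof.
move=> [_ [wv1 [wb [_ [ell1 v1b]]]]] [_ [wv2 [_ [_ [ell2 v2b]]]]].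
by rewrite (bruhat_lt_ell_gamma_eq hPhi hDelta wv1 wb ell1 v1b)
           (bruhat_lt_ell_gamma_eq hPhi hDelta wv2 wb ell2 v2b).
Qed.
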